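(* Let $\Delta\in(0,1]$ and consider the two-armed bandit problem with a single (dummy) context, with warm-start cost vector $c^s_0=(0.5,\ 0.5+\Delta/2)$ and interaction cost vector $c^b_0=(0.5,\ 0.5-\Delta/2)$ (both deterministic). Run the warm-started UCB algorithm described in the context with $n_s$ warm-start examples and $n_b$ interaction rounds, where $n_b\ge\exp(\Delta^2 n_s/16)$. Then its regret $\sum_{t=1}^{n_b}\big(c^b_0(a_t)-c^b_0(2)\big)$ is $\Omega\big(\Delta\exp(\Delta^2 n_s/16)\big)$.
   Context: Warm-started UCB algorithm: the input is a set $S$ of $n_s$ warm-start examples, each with cost vector $c^s_0$, and a number $n_b$ of interaction rounds. For $t=1,2,\dots,n_b$: for $i\in\{1,2\}$ let $n_{i,t-1}=\sum_{s=1}^{t-1}\mathbf{1}(a_s=i)$ be the number of earlier rounds in which action $i$ was taken; compute the empirical mean cost $\hat\mu_{i,t}=\frac{n_s c^s_0(i)+\sum_{s=1}^{t-1}\mathbf{1}(a_s=i)\,c^b_0(i)}{n_s+n_{i,t-1}}$ and the lower confidence bound $\mathrm{LCB}_{i,t}=\hat\mu_{i,t}-2\sqrt{\frac{\ln t}{n_s+n_{i,t-1}}}$; take action $a_t=\arg\min_{i\in\{1,2\}}\mathrm{LCB}_{i,t}$ and observe the cost $c^b_0(a_t)$. The optimal action for the interaction costs is action $2$. *)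

From Stdlib Require Import Reals Lra Lia.
Open Scope R_scope.

Inductive action := A1 | A2.

Definition costvec := action -> R.

(* Empirical mean of action i at a round where it has been taken ni times
   before; the interaction cost is deterministic so the sum
   sum_{s<t} 1(a_s=i) c^b_0(i) equals ni * c^b_0(i). *)
Definition mu_hat (ns : nat) (cs cb : costvec) (i : action) (ni : nat) : R :=
  (INR ns * cs i + INR ni * cb i) / (INR ns + INR ni).

Definition LCB (ns : nat) (cs cb : costvec) (t : nat) (i : action) (ni : nat) : R :=
  mu_hat ns cs cb i ni - 2 * sqrt (ln (INR t) / (INR ns + INR ni)).

(* argmin over {1,2}; ties broken towards action 1 (smallest index). *)
Definition choose (ns : nat) (cs cb : costvec) (t n1 n2 : nat) : action :=
  if Rle_dec (LCB ns cs cb t A1 n1) (LCB ns cs cb t A2 n2) then A1 else A2.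

(* counts ns cs cb k = (n_{1,k}, n_{2,k}): numbers of times each action was
   taken in rounds 1..k. *)
Fixpoint counts (ns : nat) (cs cb : costvec) (k : nat) : nat * nat :=
  match k with
  | O => (O, O)
  | S k' =>
      let (n1, n2) := counts ns cs cb k' in
      match choose ns cs cb (S k') n1 n2 with
      | A1 => (S n1, n2)
      | A2 => (n1, S n2)
      end
  end.

(* a_t, for t >= 1 *)
Definition ucb_action (ns : nat) (cs cb : costvec) (t : nat) : action :=
  let (n1, n2) := counts ns cs cb (pred t) in choose ns cs cb t n1 n2.

Fixpoint ucb_regret (ns : nat) (cs cb : costvec) (nb : nat) : R :=
  match nb with
  | O => 0
  | S k => ucb_regret ns cs cb k + (cb (ucb_action ns cs cb (S k)) - cb A2)
  end.

Definition cs0 (D : R) : costvec :=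
  fun i => match i with A1 => 1/2 | A2 => 1/2 + D/2 end.
Definition cb0 (D : R) : costvec :=
  fun i => match i with A1 => 1/2 | A2 => 1/2 - D/2 end.

(* While t <= exp (D^2 ns / 16), the confidence width 2 sqrt (ln t / ns) of the
   never-played action 2 is at most D/2, so its LCB stays at least its warm-start
   mean 1/2 + D/2 - D/2 = 1/2, which already dominates the LCB of action 1 (whose
   warm-start and interaction means both equal 1/2).  Hence action 1 is played in
   every one of the first floor(exp (D^2 ns / 16)) rounds, each costing D/2 of
   regret, and floor x >= x/2 for x >= 1. *)
From Pilot Require Import Defs.
From Stdlib Require Import Reals ZArith Lra Lia.
Open Scope R_scope.

Lemma nat_floor_exists (x : R) : 0 <= x -> exists m : nat, INR m <= x < INR m + 1.
Proof.
  intros Hx.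
  destruct (base_Int_part x) as [Hle Hgt].
  assert (Hnonneg : (0 <= Int_part x)%Z).
  { enough (-1 < Int_part x)%Z by lia. apply lt_IZR. lra. }
  exists (Z.to_nat (Int_part x)).
  rewrite INR_IZR_INZ, Z2Nat.id by exact Hnonneg.
  lra.
Qed.

Lemma ln_le_of_le_exp (x y : R) : 0 < x -> x <= exp y -> ln x <= y.
Proof.
  intros Hx Hxy. destruct (Rle_or_lt (ln x) y) as [Hle|Hlt]; [exact Hle|].
  apply exp_increasing in Hlt. rewrite exp_ln in Hlt by exact Hx. lra.
Qed.

Lemma mu_hat_unplayed (ns : nat) (cs cb : costvec) (i : action) :
  (1 <= ns)%nat -> mu_hat ns cs cb i 0 = cs i.
Proof.
  intros Hns. apply le_INR in Hns.
  unfold mu_hat. simpl INR. field. simpl in Hns. lra.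
Qed.

Lemma mu_hat_consistent (ns : nat) (cs cb : costvec) (i : action) (n : nat) :
  (1 <= ns)%nat -> cs i = cb i -> mu_hat ns cs cb i n = cs i.
Proof.
  intros Hns Hi. apply le_INR in Hns. pose proof (pos_INR n).
  unfold mu_hat. rewrite <- Hi. field. simpl in Hns. lra.
Qed.

Lemma LCB_le_mu_hat (ns : nat) (cs cb : costvec) (t : nat) (i : action) (n : nat) :
  LCB ns cs cb t i n <= mu_hat ns cs cb i n.
Proof. unfold LCB. pose proof (sqrt_pos (ln (INR t) / (INR ns + INR n))). lra. Qed.

Lemma confidence_width_le (D L : R) (ns : nat) :
  0 <= D -> (1 <= ns)%nat -> L <= D ^ 2 * INR ns / 16 ->
  2 * sqrt (L / (INR ns + INR 0)) <= D / 2.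
Proof.
  intros HD Hns HL. apply le_INR in Hns. simpl INR in *.
  assert (Hsq : sqrt (L / (INR ns + 0)) <= D / 4).
  { rewrite <- (sqrt_pow2 (D / 4)) by lra.
    apply sqrt_le_1_alt.
    replace ((D / 4) ^ 2) with (D ^ 2 * INR ns / 16 / (INR ns + 0)) by (field; lra).
    apply Rmult_le_compat_r; [left; apply Rinv_0_lt_compat; lra | exact HL]. }
  lra.
Qed.

(* [Defs.] is needed because Reals exports an unrelated [A1]. *)
Lemma ucb_regret_nondecreasing (ns : nat) (cs cb : costvec) (n m : nat) :
  cb Defs.A2 <= cb Defs.A1 -> (n <= m)%nat -> ucb_regret ns cs cb n <= ucb_regret ns cs cb m.
Proof.
  intros Hcb Hnm. induction Hnm as [|m _ IH]; [lra|].
  simpl ucb_regret. destruct (ucb_action ns cs cb (S m)); lra.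
Qed.

Section WarmStartInstance.

Variables (D : R) (ns : nat).
Hypothesis HD : 0 <= D.
Hypothesis Hns : (1 <= ns)%nat.

Let horizon := exp (D ^ 2 * INR ns / 16).

Lemma choose_A1_before_horizon (k : nat) :
  INR (S k) <= horizon -> choose ns (cs0 D) (cb0 D) (S k) k 0 = Defs.A1.
Proof.
  intros Hk. unfold choose. destruct Rle_dec as [_|Hnot]; [reflexivity|].
  exfalso; apply Hnot.
  assert (Hln : ln (INR (S k)) <= D ^ 2 * INR ns / 16).
  { apply ln_le_of_le_exp; [apply lt_0_INR; lia | exact Hk]. }
  pose proof (LCB_le_mu_hat ns (cs0 D) (cb0 D) (S k) Defs.A1 k) as HA1.
  pose proof (confidence_width_le D _ ns HD Hns Hln) as Hwidth.
  rewrite (mu_hat_consistent _ _ _ _ _ Hns) in HA1 by reflexivity.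
  assert (HA2 : 1 / 2 <= LCB ns (cs0 D) (cb0 D) (S k) Defs.A2 0).
  { unfold LCB. rewrite mu_hat_unplayed by exact Hns. simpl cs0. lra. }
  simpl cs0 in HA1. lra.
Qed.

Lemma counts_before_horizon (k : nat) :
  INR k <= horizon -> counts ns (cs0 D) (cb0 D) k = (k, 0%nat).
Proof.
  induction k as [|k IH]; intros Hk; [reflexivity|].
  simpl counts. rewrite S_INR in Hk. rewrite IH by lra.
  rewrite choose_A1_before_horizon by (rewrite S_INR; lra).
  reflexivity.
Qed.

Lemma ucb_action_before_horizon (k : nat) :
  INR (S k) <= horizon -> ucb_action ns (cs0 D) (cb0 D) (S k) = Defs.A1.
Proof.
  intros Hk. unfold ucb_action. simpl pred.
  rewrite counts_before_horizon by (rewrite S_INR in Hk; lra).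
  exact (choose_A1_before_horizon k Hk).
Qed.

Lemma ucb_regret_before_horizon (n : nat) :
  INR n <= horizon -> ucb_regret ns (cs0 D) (cb0 D) n = INR n * (D / 2).
Proof.
  induction n as [|n IH]; intros Hn; [simpl; lra|].
  simpl ucb_regret. rewrite ucb_action_before_horizon by exact Hn.
  rewrite S_INR in Hn |- *. rewrite IH by lra.
  simpl. lra.
Qed.

End WarmStartInstance.

Theorem mainTheorem2 :
  exists c : R, 0 < c /\
    forall (D : R) (ns nb : nat),
      0 < D <= 1 ->
      (1 <= ns)%nat ->
      INR nb >= exp (D ^ 2 * INR ns / 16) ->
      ucb_regret ns (cs0 D) (cb0 D) nb >= c * D * exp (D ^ 2 * INR ns / 16).
Proof.
  exists (1 / 4). split; [lra|].
  intros D ns nb [HD _] Hns Hnb.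
  set (E := exp (D ^ 2 * INR ns / 16)) in *.
  assert (HE : 1 <= E).
  { pose proof (exp_ineq1_le (D ^ 2 * INR ns / 16)).
    apply le_INR in Hns. simpl in Hns. pose proof (pow2_ge_0 D). unfold E. nra. }
  destruct (nat_floor_exists E) as [m [HmE HEm]]; [lra|].
  assert (Hm1 : 1 <= INR m) by (apply (le_INR 1), INR_lt; simpl; lra).
  assert (Hmnb : (m <= nb)%nat) by (apply INR_le; lra).
  assert (Hcb : cb0 D Defs.A2 <= cb0 D Defs.A1) by (simpl; lra).
  pose proof (ucb_regret_nondecreasing ns (cs0 D) (cb0 D) m nb Hcb Hmnb) as Hmono.
  rewrite (ucb_regret_before_horizon D ns (Rlt_le _ _ HD) Hns m HmE) in Hmono.
  assert (HE2m : E <= 2 * INR m) by lra.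
  nra.
Qed.
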